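(* Let $B>0$, $\mu>0$, and let $A:[0,\infty)\to[0,\infty)$ be such that \[ f(0)\;=\;\frac{B}{\mu}\int_0^\infty e^{-\mu\tau}A(\tau)\,d\tau \] is finite and $f(0)>1$. For $\theta\in(0,1]$ and $p>0$ let $F(\theta,p)$ denote the unique positive solution $x$ of \[ 1=\frac{B}{1+p-\theta}\int_0^\infty\!\!\int_0^\infty\Big(p\theta e^{-\theta a x}+(1+p)(1-\theta)e^{-(1+p)a x}\Big)e^{-\mu(a+\tau)}A(\tau)\,d\tau\,da, \] which equals \[ F(\theta,p)=\frac{\mu}{2}\left\{\Big(f(0)-\frac{1+p+\theta}{\theta(1+p)}\Big)+\sqrt{\Big(\frac{1+p+\theta}{\theta(1+p)}-f(0)\Big)^2+4\,\frac{f(0)-1}{\theta(1+p)}}\right\}. \] Then \[ \lim_{p\to\infty}F(\theta,p)=\begin{cases}0 & \text{if } \theta\le \frac{1}{f(0)},\\[2pt] \mu\big(f(0)-\frac{1}{\theta}\big) & \text{if } \frac{1}{f(0)}<\theta\le 1.\end{cases} \]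
   Context: Age-structured epidemic model with vaccination and constant per-capita mortality rate $\mu$ (survival function $e^{-\mu a}$): $B$ is the constant birth rate, $A(\tau)$ the expected contribution to the force of infection of an individual infected $\tau$ time units ago, $\theta$ the vaccine parameter (vaccinated susceptibles are infected at $\theta$ times the force of infection), and the vaccination rate equals $p$ times the force of infection. $F(\theta,p)$ is the endemic force of infection and $f(0)$ the basic reproduction number. *)

From HB Require Import structures.
From mathcomp Require Import all_boot all_order all_algebra.
From mathcomp Require Import all_classical all_reals all_analysis.
Set Implicit Arguments. Unset Strict Implicit. Unset Printing Implicit Defensive.
Import Order.TTheory GRing.Theory Num.Theory.
Local Open Scope classical_set_scope.
Local Open Scope ring_scope.

Definition Kint (R : realType) (mu : R) (A : R -> R) : \bar R :=
  (\int[@lebesgue_measure R]_(tau in `[0%R, +oo[) (expR (- mu * tau) * A tau)%:E)%E.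

Definition f0 (R : realType) (B mu : R) (A : R -> R) : R :=
  B / mu * fine (Kint mu A).

Definition endemic_rhs (R : realType) (B mu : R) (A : R -> R) (theta p x : R)
  : \bar R :=
  ((B / (1 + p - theta))%:E *
   \int[@lebesgue_measure R]_(a in `[0%R, +oo[)
     \int[@lebesgue_measure R]_(tau in `[0%R, +oo[)
        ((p * theta * expR (- (theta * a * x))
          + (1 + p) * (1 - theta) * expR (- ((1 + p) * a * x)))
         * expR (- mu * (a + tau)) * A tau)%:E)%E.

Definition is_endemic_FOI (R : realType) (B mu : R) (A : R -> R) (theta p x : R)
  : Prop :=
  0 < x /\ endemic_rhs B mu A theta p x = 1%E /\
  (forall y : R, 0 < y -> endemic_rhs B mu A theta p y = 1%E -> y = x).

From HB Require Import structures.
From mathcomp Require Import all_boot all_order all_algebra.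
From mathcomp Require Import all_classical all_reals all_analysis.
From mathcomp Require Import measurable_realfun exponential_distribution.
From mathcomp Require Import ring lra.
Import Order.TTheory GRing.Theory Num.Theory.
Import numFieldNormedType.Exports.
Local Open Scope classical_set_scope.
Local Open Scope ring_scope.

(* Integrating out the vaccination age and the infection age reduces the
   endemic equation to [endemic_fun c mu theta p x = 1] with [c = B K = mu f(0)],
   a rational function of x that is nonincreasing on (0, oo).  For fixed y > 0
   it tends, as p -> oo, to [c theta / (theta y + mu)], which is < 1 exactly
   when y > mu (f(0) - 1/theta).  Hence the positive root is eventually trapped
   in any neighbourhood of the crossing point, or of 0 if that point is not
   positive. *)

Section exponential_integrals.
Context {R : realType}.
Local Notation leb := (@lebesgue_measure R).

Lemma measurable_expR_mulNl (k : R) :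
  measurable_fun [set: R] (fun a : R => expR (- k * a)).
Proof. by apply: measurableT_comp; [exact: measurable_expR | exact: measurable_funM]. Qed.

Lemma integral_expR_mulNl (c : R) : 0 < c ->
  (\int[leb]_(a in `[0%R, +oo[) (expR (- c * a))%:E = (c^-1)%:E)%E.
Proof.
move=> c0; have := integral_exponential_pdf c0.
rewrite (_ : (fun x => (exponential_pdf c x)%:E) =
   ((fun x => (c%:E * (expR (- c * x))%:E)) \_ `[0%R, +oo[)%E); last first.
  by apply/funext => x; rewrite /exponential_pdf !patchE; case: ifP; rewrite ?EFinM.
rewrite -integral_mkcond ge0_integralZl_EFin ?ltW //; last first.
  by apply/measurable_EFinP; apply: measurable_funS (measurable_expR_mulNl c).
move=> /(congr1 (fun e => (c^-1)%:E * e)%E).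
by rewrite muleA -EFinM mulVf ?gt_eqF // mul1e mule1.
Qed.

Lemma integral_expR_mulNl_sum (a b c d : R) : 0 <= a -> 0 <= b -> 0 < c -> 0 < d ->
  (\int[leb]_(t in `[0%R, +oo[) (a * expR (- c * t) + b * expR (- d * t))%:E
   = (a / c + b / d)%:E)%E.
Proof.
move=> a0 b0 c0 d0.
have mexp (k : R) : measurable_fun (`[0%R, +oo[ : set R) (fun t => (expR (- k * t))%:E).
  by apply/measurable_EFinP; apply: measurable_funS (measurable_expR_mulNl k).
under eq_integral do rewrite EFinD !EFinM.
rewrite ge0_integralD //; last 4 first.
- by move=> t _; rewrite -EFinM lee_fin mulr_ge0 ?expR_ge0.
- exact: emeasurable_funM (mexp c).
- by move=> t _; rewrite -EFinM lee_fin mulr_ge0 ?expR_ge0.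
- exact: emeasurable_funM (mexp d).
by rewrite !ge0_integralZl_EFin // ?integral_expR_mulNl //; exact: mexp.
Qed.
End exponential_integrals.

Lemma cvg_inv_addrr {R : realFieldType} (a : R) : (r + a)^-1 @[r --> +oo] --> 0.
Proof.
apply/gtr0_cvgV0; last exact: cvg_addrr.
by near=> r; suff : - a < r by lra; near: r; apply: nbhs_pinfty_gt; rewrite num_real.
Unshelve. all: by end_near.
Qed.

Section endemic_fun.
Context {R : realFieldType}.

Definition endemic_fun (c mu theta p x : R) : R :=
  c / (1 + p - theta) *
  (p * theta / (theta * x + mu) + (1 + p) * (1 - theta) / ((1 + p) * x + mu)).

Definition endemic_fun_lim (c mu theta y : R) : R := c * theta / (theta * y + mu).

Variables (c mu theta : R).

Lemma endemic_fun_nonincr (p y z : R) : 0 <= c -> 0 < mu -> 0 < theta <= 1 ->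
  0 < p -> 0 < y <= z -> endemic_fun c mu theta p z <= endemic_fun c mu theta p y.
Proof.
move=> c0 mu0 /andP[theta0 theta1] p0 /andP[y0 yz].
apply: ler_wpM2l; first by rewrite divr_ge0 //; lra.
apply: lerD; apply: ler_wpM2l; rewrite ?mulr_ge0 //; try lra.
- by rewrite lef_pV2 ?posrE; nra.
- by rewrite lef_pV2 ?posrE; nra.
Qed.

Lemma endemic_fun_cvg (y : R) : 0 < mu -> 0 < theta <= 1 -> 0 < y ->
  endemic_fun c mu theta p y @[p --> +oo] --> endemic_fun_lim c mu theta y.
Proof.
move=> mu0 /andP[theta0 theta1] y0.
(* Every occurrence of p is moved into a factor [(p + a)^-1], which tends to 0. *)
have endemic_funE : \forall p \near +oo,
    c * theta / (theta * y + mu) * (1 - (1 - theta) * (p + (1 - theta))^-1)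
    + c * (1 - theta) * (p + (1 - theta))^-1 * (y + mu * (p + 1)^-1)^-1
    = endemic_fun c mu theta p y.
  near=> p; have p0 : 0 < p by near: p; apply: nbhs_pinfty_gt; rewrite num_real.
  rewrite /endemic_fun; field.
  by rewrite !gt_eqF //; nra.
have y_ne0 : y + mu * 0 != 0 by rewrite mulr0 addr0 gt_eqF.
have lim := cvgD
  (cvgM (cvg_cst (c * theta / (theta * y + mu)))
        (cvgB (cvg_cst (1 : R)) (cvgM (cvg_cst (1 - theta)) (cvg_inv_addrr (1 - theta)))))
  (cvgM (cvgM (cvg_cst (c * (1 - theta))) (cvg_inv_addrr (1 - theta)))
        (cvgV y_ne0 (cvgD (cvg_cst y) (cvgM (cvg_cst mu) (cvg_inv_addrr 1))))).
rewrite !mulr0 subr0 mulr1 mul0r addr0 in lim.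
apply: cvg_trans (near_eq_cvg endemic_funE) _; exact: lim.
Unshelve. all: by end_near.
Qed.

Lemma endemic_fun_lim_lt1 (f y : R) : 0 < mu -> 0 < theta -> 0 <= y ->
  (endemic_fun_lim (mu * f) mu theta y < 1) = (mu * (f - 1 / theta) < y).
Proof.
move=> mu0 theta0 y0; rewrite /endemic_fun_lim ltr_pdivrMr ?mul1r; last by nra.
have e : mu * (f - 1 / theta) * theta = mu * f * theta - mu by field; rewrite gt_eqF.
by apply/idP/idP => h; nra.
Qed.

Lemma endemic_fun_lim_gt1 (f y : R) : 0 < mu -> 0 < theta -> 0 <= y ->
  (1 < endemic_fun_lim (mu * f) mu theta y) = (y < mu * (f - 1 / theta)).
Proof.
move=> mu0 theta0 y0; rewrite /endemic_fun_lim ltr_pdivlMr ?mul1r; last by nra.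
have e : mu * (f - 1 / theta) * theta = mu * f * theta - mu by field; rewrite gt_eqF.
by apply/idP/idP => h; nra.
Qed.
End endemic_fun.

Section root_limit.
Context {T : Type} {F : set_system T} {FF : Filter F} {R : realFieldType}.
Context {h : T -> R -> R} {x : T -> R} {phi : R -> R}.
Hypothesis x_root : \forall p \near F, 0 < x p /\ h p (x p) = 1.
Hypothesis h_nonincr : \forall p \near F, forall y z, 0 < y <= z -> h p z <= h p y.
Hypothesis h_cvg : forall y, 0 < y -> h^~ y @ F --> phi y.

Lemma root_eventually_lt y : 0 < y -> phi y < 1 -> \forall p \near F, x p < y.
Proof.
move=> y0 phiy1; near=> p; rewrite ltNge; apply/negP => yx.
have [x0 hx1] : 0 < x p /\ h p (x p) = 1 by near: p.
have hp : forall y z, 0 < y <= z -> h p z <= h p y by near: p.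
have := hp y (x p); rewrite y0 yx => /(_ isT).
have : h p y < 1 by near: p; exact: (cvgr_lt _ (h_cvg _ y0) _ phiy1).
lra.
Unshelve. all: by end_near.
Qed.

Lemma root_eventually_gt y : 0 < y -> 1 < phi y -> \forall p \near F, y < x p.
Proof.
move=> y0 phiy1; near=> p; rewrite ltNge; apply/negP => xy.
have [x0 hx1] : 0 < x p /\ h p (x p) = 1 by near: p.
have hp : forall y z, 0 < y <= z -> h p z <= h p y by near: p.
have := hp (x p) y; rewrite x0 xy => /(_ isT).
have : 1 < h p y by near: p; exact: (cvgr_gt _ (h_cvg _ y0) _ phiy1).
lra.
Unshelve. all: by end_near.
Qed.

Lemma root_cvg l : 0 <= l ->
  (forall y, l < y -> phi y < 1) -> (forall y, 0 < y < l -> 1 < phi y) ->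
  x @ F --> l.
Proof.
move=> l0 phi_lt1 phi_gt1; apply/cvgrPdist_lt => e e0.
have x_lt : \forall p \near F, x p < l + e.
  by apply: root_eventually_lt; [lra | apply: phi_lt1; lra].
have x_gt : \forall p \near F, l - e < x p.
  have [el|le] := ltP e l.
    by apply: root_eventually_gt; [lra | apply: phi_gt1; lra].
  by apply: filterS x_root => p [x0 _]; lra.
near=> p; rewrite ltr_norml.
have : x p < l + e by near: p.
have : l - e < x p by near: p.
by move=> *; apply/andP; split; lra.
Unshelve. all: by end_near.
Qed.

End root_limit.

Section endemic_equation.
Context {R : realType} (B : R) {mu : R} {A : R -> R}.
Hypothesis mu_gt0 : 0 < mu.
Hypothesis A_ge0 : forall t, 0 <= t -> 0 <= A t.
Hypothesis mA : measurable_fun (`[0%R, +oo[ : set R) A.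
Hypothesis Kint_fin : (Kint mu A < +oo)%E.
Local Notation leb := (@lebesgue_measure R).
Local Notation K := (fine (Kint mu A)).

Lemma Kint_ge0 : (0 <= Kint mu A)%E.
Proof.
apply: integral_ge0 => t; rewrite /= in_itv /= andbT => t0.
by rewrite lee_fin mulr_ge0 ?expR_ge0 ?A_ge0.
Qed.

Lemma Kint_fineK : Kint mu A = K%:E.
Proof. by rewrite fineK // ge0_fin_numE // Kint_ge0. Qed.

Lemma integral_delayed_infectivity (k a : R) : 0 <= k ->
  (\int[leb]_(tau in `[0%R, +oo[) (k * expR (- mu * (a + tau)) * A tau)%:E
   = (k * expR (- mu * a) * K)%:E)%E.
Proof.
move=> k0.
under eq_integral do rewrite mulrDr expRD mulrA -mulrA EFinM.
rewrite ge0_integralZl_EFin ?mulr_ge0 ?expR_ge0 //.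
- by rewrite -/(Kint mu A) Kint_fineK -EFinM.
- by move=> t; rewrite /= in_itv /= andbT => t0; rewrite lee_fin mulr_ge0 ?expR_ge0 ?A_ge0.
- apply/measurable_EFinP; apply: measurable_funM => //.
  exact: measurable_funS (measurable_expR_mulNl mu).
Qed.

Lemma endemic_rhsE (theta p x : R) : 0 < p -> 0 < theta <= 1 -> 0 <= x ->
  endemic_rhs B mu A theta p x = (endemic_fun (B * K) mu theta p x)%:E.
Proof.
move=> p0 /andP[theta0 theta1] x0.
have a0 : 0 <= p * theta by rewrite mulr_ge0 // ltW.
have b0 : 0 <= (1 + p) * (1 - theta) by rewrite mulr_ge0 ?subr_ge0 // addr_ge0 // ltW.
have c1 : 0 < theta * x + mu by rewrite ltr_wpDl // mulr_ge0 // ltW.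
have c2 : 0 < (1 + p) * x + mu by rewrite ltr_wpDl // mulr_ge0 // addr_ge0 // ltW.
rewrite /endemic_rhs [X in (_ * X)%E](_ : _ = \int[leb]_(a in `[0%R, +oo[) (K%:E *
  (p * theta * expR (- (theta * x + mu) * a)
   + (1 + p) * (1 - theta) * expR (- ((1 + p) * x + mu) * a))%:E))%E; last first.
  apply: eq_integral => a _; rewrite integral_delayed_infectivity; last first.
    by rewrite addr_ge0 // mulr_ge0 ?expR_ge0.
  rewrite -EFinM mulrC; congr (_ * _)%:E.
  by rewrite mulrDl -!mulrA -!expRD; congr (_ * (_ * expR _) + _ * (_ * expR _)); ring.
rewrite ge0_integralZl_EFin ?fine_ge0 ?Kint_ge0 //.
- rewrite integral_expR_mulNl_sum //.
  by rewrite -!EFinM /endemic_fun; congr EFin; ring.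
- by move=> a _; rewrite lee_fin addr_ge0 // mulr_ge0 ?expR_ge0.
- apply/measurable_EFinP; apply: measurable_funD; apply: measurable_funM => //;
  exact: measurable_funS (measurable_expR_mulNl _).
Qed.
End endemic_equation.

Theorem mainTheorem3 (R : realType) (B mu : R) (A : R -> R)
  (F : R -> R -> R) :
  0 < B -> 0 < mu ->
  (forall t, 0 <= t -> 0 <= A t) ->
  measurable_fun (`[0%R, +oo[ : set R) A ->
  (Kint mu A < +oo)%E ->
  1 < f0 B mu A ->
  (forall theta p, 0 < theta <= 1 -> 0 < p ->
     is_endemic_FOI B mu A theta p (F theta p)) ->
  forall theta, 0 < theta <= 1 ->
    F theta p @[p --> +oo] -->
      (if theta <= 1 / f0 B mu A then 0
       else mu * (f0 B mu A - 1 / theta)).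
Proof.
move=> B0 mu0 A0 mA Kfin f1 F_root theta theta01; have /andP[theta0 theta1] := theta01.
set f := f0 B mu A.
have f_gt0 : 0 < f by apply: lt_trans f1.
have BK : B * fine (Kint mu A) = mu * f by rewrite /f /f0; field; rewrite gt_eqF.
have F_endemic : \forall p \near +oo,
    0 < F theta p /\ endemic_fun (mu * f) mu theta p (F theta p) = 1.
  near=> p; have p0 : 0 < p by near: p; apply: nbhs_pinfty_gt; rewrite num_real.
  have [F0 [rhs1 _]] := F_root theta p theta01 p0; split => //.
  have F_ge0 := ltW F0.
  by move: rhs1; rewrite endemic_rhsE // BK => -[].
have endemic_nonincr : \forall p \near +oo, forall y z, 0 < y <= z ->
    endemic_fun (mu * f) mu theta p z <= endemic_fun (mu * f) mu theta p y.
  near=> p; have p0 : 0 < p by near: p; apply: nbhs_pinfty_gt; rewrite num_real.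
  by move=> y z; apply: endemic_fun_nonincr => //; rewrite mulr_ge0 ?ltW.
have threshold : (theta <= 1 / f) = (mu * (f - 1 / theta) <= 0).
  by rewrite pmulr_rle0 // subr_le0 !ler_pdivlMr // mulrC.
rewrite threshold; case: leP => [l_le0 | l_gt0];
  apply: (root_cvg F_endemic endemic_nonincr (fun y => endemic_fun_cvg _ _ _ y mu0 theta01)).
- by [].
- by move=> y y0; rewrite endemic_fun_lim_lt1 ?ltW // (le_lt_trans l_le0 y0).
- by move=> y /andP[y0 /(lt_trans y0)]; rewrite ltxx.
- exact: ltW.
- by move=> y ly; rewrite endemic_fun_lim_lt1 // ltW // (lt_trans l_gt0 ly).
- by move=> y /andP[y0 yl]; rewrite endemic_fun_lim_gt1 // ltW.
Unshelve. all: by end_near.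
Qed.
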